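(* Let $K$ be a finite oriented simplicial complex, let $d \geq 0$, and let $n$ be the number of $d$-simplices of $K$. Let ${\bm{B}}_d$ and ${\bm{B}}_{d+1}$ be the boundary matrices of $K$ in degrees $d$ and $d+1$ (with ${\bm{B}}_0 = 0$ and ${\bm{B}}_{d+1}=0$ if $K$ has no $(d+1)$-simplices). Let $F, F', Z$ be positive integers and, for each head $z \in \{1,\dots,Z\}$, fix matrices ${\bm{W}}^{z}_1, {\bm{W}}^{z}_2 \in \mathbb{R}^{F' \times F}$, functions $a^{z}_1, a^{z}_2 : \mathbb{R}^{F'} \times \mathbb{R}^{F'} \to \mathbb{R}$ and a function $\phi^{z} : \mathbb{R}^{F'} \times \mathbb{R}^{F'} \to \mathbb{R}^{G}$. Assume that for every $z$ and $i\in\{1,2\}$, $a^z_i$ is even in each argument separately, i.e. $a^z_i(-u,v) = a^z_i(u,v) = a^z_i(u,-v)$ for all $u,v$, and that $\phi^z$ is odd, i.e. $\phi^z(-x,-y) = -\phi^z(x,y)$ for all $x,y$. Let $f$ be the SAT layer defined below, mapping a feature matrix ${\bm{H}} \in \mathbb{R}^{n\times F}$ (rows indexed by the $d$-simplices) together with $({\bm{B}}_d, {\bm{B}}_{d+1})$ to $f({\bm{H}}, {\bm{B}}_d, {\bm{B}}_{d+1}) \in \mathbb{R}^{n \times ZG}$. Then $f$ is orientation equivariant: for every diagonal matrix ${\bm{T}} \in \mathbb{R}^{n\times n}$ with diagonal entries in $\{\pm 1\}$, $$f({\bm{T}}{\bm{H}}, {\bm{B}}_d{\bm{T}}, {\bm{T}}{\bm{B}}_{d+1})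 = {\bm{T}}\, f({\bm{H}}, {\bm{B}}_d, {\bm{B}}_{d+1}).$$
   Context: Boundary matrices: for an oriented simplex $[v_0,\dots,v_k]$, $\partial_k [v_0,\dots,v_k] = \sum_{i=0}^k (-1)^i [v_0,\dots,\hat v_i,\dots,v_k]$, where two orderings of the vertices represent the same oriented simplex if they differ by an even permutation and the negative of each other if they differ by an odd permutation; ${\bm{B}}_k$ is the matrix of $\partial_k$ with rows indexed by the (chosen oriented) $(k-1)$-simplices and columns by the $k$-simplices. Multiplying ${\bm{B}}_d$ on the right by ${\bm{T}}$ and ${\bm{B}}_{d+1}$ on the left by ${\bm{T}}$ corresponds to reversing the orientation of those $d$-simplices whose diagonal entry in ${\bm{T}}$ is $-1$. Neighbourhoods (purely combinatorial, independent of orientations): for a $d$-simplex $\sigma$, ${\mathcal{N}}^{\uparrow}_\sigma$ is the set consisting of $\sigma$ together with all $d$-simplices $\tau \ne \sigma$ such that $\sigma$ and $\tau$ are both faces of a common $(d+1)$-simplex (upper adjacent); ${\mathcal{N}}^{\downarrow}_\sigma$ is the set consisting of $\sigma$ together with all $d$-simplices $\tau\neq\sigma$ sharing a common $(d-1)$-dimensional face with $\sigma$ (lower adjacent). Relative orientations: set $o^{\uparrow}_{\sigma,\sigma} = o^{\downarrow}_{\sigma,\sigma} = 1$; for $\tau \in {\mathcal{N}}^{\uparrow}_\sigma\setminus\{\sigma\}$ set $o^{\uparrow}_{\sigma,\tau} = ({\bm{B}}_{d+1}{\bm{B}}_{d+1}^\top)_{\sigma\tau} \in \{\pm1\}$,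 and for $\tau \in {\mathcal{N}}^{\downarrow}_\sigma\setminus\{\sigma\}$ set $o^{\downarrow}_{\sigma,\tau} = ({\bm{B}}_{d}^\top{\bm{B}}_{d})_{\sigma\tau} \in \{\pm1\}$ (two distinct $d$-simplices share at most one common coface and at most one common face, so these entries are $\pm1$). SAT layer: writing ${\bm{h}}_\sigma \in \mathbb{R}^F$ for the row of ${\bm{H}}$ indexed by $\sigma$, the attention coefficients of head $z$ are $$\alpha^{\uparrow,z}_{\sigma,\tau} = o^{\uparrow}_{\sigma,\tau}\cdot \frac{\exp\big(a^z_1({\bm{W}}^z_1{\bm{h}}_\sigma, {\bm{W}}^z_1{\bm{h}}_\tau)\big)}{\sum_{\rho\in{\mathcal{N}}^{\uparrow}_\sigma}\exp\big(a^z_1({\bm{W}}^z_1{\bm{h}}_\sigma, {\bm{W}}^z_1{\bm{h}}_\rho)\big)}, \quad \tau\in{\mathcal{N}}^{\uparrow}_\sigma,$$ $$\alpha^{\downarrow,z}_{\sigma,\tau} = o^{\downarrow}_{\sigma,\tau}\cdot \frac{\exp\big(a^z_2({\bm{W}}^z_2{\bm{h}}_\sigma, {\bm{W}}^z_2{\bm{h}}_\tau)\big)}{\sum_{\rho\in{\mathcal{N}}^{\downarrow}_\sigma}\exp\big(a^z_2({\bm{W}}^z_2{\bm{h}}_\sigma, {\bm{W}}^z_2{\bm{h}}_\rho)\big)}, \quad \tau\in{\mathcal{N}}^{\downarrow}_\sigma,$$ and the output row indexed by $\sigma$ is the concatenation over $z=1,\dots,Z$ of $$\phi^z\Big(\sum_{\tau\in{\mathcal{N}}^{\uparrow}_\sigma}\alpha^{\uparrow,z}_{\sigma,\tau}{\bm{W}}^z_1{\bm{h}}_\tau,\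 \sum_{\tau\in{\mathcal{N}}^{\downarrow}_\sigma}\alpha^{\downarrow,z}_{\sigma,\tau}{\bm{W}}^z_2{\bm{h}}_\tau\Big).$$ (When the orientations and boundary matrices change as in the claim, the coefficients $o$ are recomputed from the new boundary matrices.) *)

From HB Require Import structures.
From mathcomp Require Import all_boot all_order all_algebra.
From mathcomp Require Import reals.
From mathcomp.analysis Require Import sequences exp.
Set Implicit Arguments. Unset Strict Implicit. Unset Printing Implicit Defensive.
Import Order.TTheory GRing.Theory Num.Theory.
Local Open Scope ring_scope.

Definition simplicial_complex (N : nat) (K : {set {set 'I_N}}) : Prop :=
  (forall sg, sg \in K -> sg != set0) /\
  (forall sg tau : {set 'I_N}, sg \in K -> tau \subset sg -> tau != set0 -> tau \in K).

(* The simplices of K with exactly k vertices (i.e. the (k-1)-simplices). *)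
Definition cells (N : nat) (K : {set {set 'I_N}}) (k : nat) : {set {set 'I_N}} :=
  [set sg in K | #|sg| == k].

Definition cell (N : nat) (K : {set {set 'I_N}}) (k : nat)
  (i : 'I_#|cells K k|) : {set 'I_N} := enum_val i.

(* Orientation: an oriented simplicial complex is given by a sign
   s sg : bool for every simplex; the chosen oriented simplex for sg is
   [v_0,...,v_k] (vertices in increasing order) if s sg = false and
   -[v_0,...,v_k] if s sg = true.  (Every orientation is of this form.)
   Incidence coefficient of the oriented face tau in the boundary of the
   oriented simplex sg: if tau = sg minus its i-th vertex (0-based, increasing
   order), it is (-1)^i * (sign of tau) * (sign of sg); otherwise 0. *)
Definition incidence (R : pzRingType) (N : nat) (s : {set 'I_N} -> bool)
  (tau sg : {set 'I_N}) : R :=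
  if (tau \subset sg) && (#|sg| == #|tau|.+1) then
    match [pick v in sg :\: tau] with
    | Some v => (-1) ^+ (#|[set u in sg | (u < v)%N]| + s tau + s sg)
    | None => 0
    end
  else 0.

(* Boundary matrix B_k (k >= 0) : rows = (k-1)-simplices (k vertices),
   columns = k-simplices (k+1 vertices).  B_0 has zero rows (no (-1)-simplices),
   i.e. B_0 = 0. *)
Definition boundary (R : pzRingType) (N : nat) (K : {set {set 'I_N}})
  (s : {set 'I_N} -> bool) (k : nat) :
  'M[R]_(#|cells K k|, #|cells K k.+1|) :=
  \matrix_(i, j) incidence R s (cell i) (cell j).

Section SAT.
Variables (R : realType) (N : nat) (K : {set {set 'I_N}}) (d : nat).
Let n := #|cells K d.+1|.
Variables (F F' G Z : nat).

Definition upN (i : 'I_n) : {set 'I_n} :=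
  [set j | (j == i) ||
     [exists rho in cells K d.+2, (cell i \subset rho) && (cell j \subset rho)]].

Definition downN (i : 'I_n) : {set 'I_n} :=
  [set j | (j == i) ||
     [exists rho in cells K d, (rho \subset cell i) && (rho \subset cell j)]].

Variables (m p : nat) (Bd : 'M[R]_(m, n)) (Bu : 'M[R]_(n, p)) (H : 'M[R]_(n, F)).
Variables (W1 W2 : 'I_Z -> 'M[R]_(F', F))
          (a1 a2 : 'I_Z -> 'cV[R]_F' -> 'cV[R]_F' -> R)
          (phi : 'I_Z -> 'cV[R]_F' -> 'cV[R]_F' -> 'cV[R]_G).

Definition o_up (i j : 'I_n) : R := if i == j then 1 else (Bu *m Bu^T) i j.
Definition o_down (i j : 'I_n) : R := if i == j then 1 else (Bd^T *m Bd) i j.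

Definition Wh (W : 'M[R]_(F', F)) (i : 'I_n) : 'cV[R]_F' := W *m (row i H)^T.

Definition alpha_up (z : 'I_Z) (i j : 'I_n) : R :=
  o_up i j * (expR (a1 z (Wh (W1 z) i) (Wh (W1 z) j)) /
     \sum_(k in upN i) expR (a1 z (Wh (W1 z) i) (Wh (W1 z) k))).

Definition alpha_down (z : 'I_Z) (i j : 'I_n) : R :=
  o_down i j * (expR (a2 z (Wh (W2 z) i) (Wh (W2 z) j)) /
     \sum_(k in downN i) expR (a2 z (Wh (W2 z) i) (Wh (W2 z) k))).

Definition msg_up (z : 'I_Z) (i : 'I_n) : 'cV[R]_F' :=
  \sum_(j in upN i) alpha_up z i j *: Wh (W1 z) j.

Definition msg_down (z : 'I_Z) (i : 'I_n) : 'cV[R]_F' :=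
  \sum_(j in downN i) alpha_down z i j *: Wh (W2 z) j.

(* SAT layer: row sigma of the output is the concatenation over heads
   z = 0..Z-1 of phi^z(msg_up, msg_down) (block z occupies columns z*G..z*G+G-1). *)
Definition sat_layer : 'M[R]_(n, Z * G) :=
  \matrix_(i < n)
     mxvec (\matrix_(z < Z) (phi z (msg_up z i) (msg_down z i))^T).

End SAT.

From HB Require Import structures.
From mathcomp Require Import all_boot all_order all_algebra.
From mathcomp Require Import reals.
From mathcomp.analysis Require Import sequences exp.
Set Implicit Arguments. Unset Strict Implicit. Unset Printing Implicit Defensive.
Import Order.TTheory GRing.Theory Num.Theory.
Local Open Scope ring_scope.

(* A diagonal sign matrix T = diag_mx t multiplies row i of H, row/column i of
   the boundary matrices and hence the relative orientations o(i, j) by t_i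
   (resp. t_i t_j).  The evenness of the attention scores makes the softmax
   weights sign-blind, so alpha(i, j) picks up exactly t_i t_j; the extra t_j
   cancels against the t_j carried by W h_j, leaving both messages of i scaled
   by t_i, and the oddness of phi passes t_i to the output row.  Nothing about
   the boundary matrices is used beyond their shapes. *)

Definition even2 (V T : zmodType) (f : V -> V -> T) : Prop :=
  forall u v, f (- u) v = f u v /\ f u (- v) = f u v.

Definition odd2 (V W : zmodType) (f : V -> V -> W) : Prop :=
  forall x y, f (- x) (- y) = - f x y.

Section Signs.
Variable R : pzRingType.

Definition is_sign (c : R) : Prop := c = 1 \/ c = -1.

Lemma mul_sign (c : R) : is_sign c -> c * c = 1.
Proof. by case=> ->; rewrite ?mulrNN mulr1. Qed.

Lemma even2_signZ (V : lmodType R) (T : zmodType) (f : V -> V -> T) c e :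
  even2 f -> is_sign c -> is_sign e -> forall u v, f (c *: u) (e *: v) = f u v.
Proof.
move=> hf [->|->] [->|->] u v; rewrite ?scale1r ?scaleN1r //.
- by rewrite (proj2 (hf _ _)).
- by rewrite (proj1 (hf _ _)).
- by rewrite (proj1 (hf _ _)) (proj2 (hf _ _)).
Qed.

Lemma odd2_signZ (V W : lmodType R) (f : V -> V -> W) c :
  odd2 f -> is_sign c -> forall x y, f (c *: x) (c *: y) = c *: f x y.
Proof. by move=> hf [->|->] x y; rewrite ?scale1r ?scaleN1r. Qed.

End Signs.

Lemma sum_signed_weights (R : comPzRingType) (V : lmodType R) (I : finType)
    (A : {pred I}) (t : I -> R) (c : R) (alpha : I -> R) (w : I -> V) :
  (forall j, t j * t j = 1) ->
  \sum_(j in A) (c * t j * alpha j) *: (t j *: w j)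
  = c *: \sum_(j in A) alpha j *: w j.
Proof.
move=> htt; rewrite scaler_sumr; apply: eq_bigr => j _.
by rewrite !scalerA mulrAC -[c * t j * t j]mulrA htt mulr1.
Qed.

Section SignEquivariance.
Variables (R : realType) (N : nat) (K : {set {set 'I_N}}) (d : nat).
Local Notation n := #|cells K d.+1|.
Variables (F F' G Z m p : nat).
Variables (Bd : 'M[R]_(m, n)) (Bu : 'M[R]_(n, p)) (H : 'M[R]_(n, F)).
Variables (W1 W2 : 'I_Z -> 'M[R]_(F', F))
          (a1 a2 : 'I_Z -> 'cV[R]_F' -> 'cV[R]_F' -> R)
          (phi : 'I_Z -> 'cV[R]_F' -> 'cV[R]_F' -> 'cV[R]_G).
Hypotheses (ha1 : forall z, even2 (a1 z)) (ha2 : forall z, even2 (a2 z))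
           (hphi : forall z, odd2 (phi z)).
Variable t : 'rV[R]_n.
Hypothesis ht : forall i, is_sign (t 0 i).
Local Notation T := (diag_mx t).

Let tt i : t 0 i * t 0 i = 1. Proof. exact: mul_sign. Qed.

Lemma Wh_sign (W : 'M[R]_(F', F)) i : Wh (T *m H) W i = t 0 i *: Wh H W i.
Proof. by rewrite /Wh row_mul row_diag_mx -scalemxAl -rowE !linearZ. Qed.

Lemma o_up_sign i j : o_up (T *m Bu) i j = t 0 i * t 0 j * o_up Bu i j.
Proof.
rewrite /o_up; case: eqP => [->|_]; first by rewrite tt mulr1.
by rewrite trmx_mul tr_diag_mx mulmxA mul_mx_diag -mulmxA mul_diag_mx !mxE mulrAC.
Qed.

Lemma o_down_sign i j : o_down (Bd *m T) i j = t 0 i * t 0 j * o_down Bd i j.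
Proof.
rewrite /o_down; case: eqP => [->|_]; first by rewrite tt mulr1.
by rewrite trmx_mul tr_diag_mx mulmxA mul_mx_diag -mulmxA mul_diag_mx !mxE mulrAC.
Qed.

Lemma alpha_up_sign z i j :
  alpha_up (T *m Bu) (T *m H) W1 a1 z i j
  = t 0 i * t 0 j * alpha_up Bu H W1 a1 z i j.
Proof.
rewrite /alpha_up o_up_sign !Wh_sign (even2_signZ (ha1 z) (ht i) (ht j)).
under eq_bigr => k _ do rewrite Wh_sign (even2_signZ (ha1 z) (ht i) (ht k)).
by rewrite !mulrA.
Qed.

Lemma alpha_down_sign z i j :
  alpha_down (Bd *m T) (T *m H) W2 a2 z i j
  = t 0 i * t 0 j * alpha_down Bd H W2 a2 z i j.
Proof.
rewrite /alpha_down o_down_sign !Wh_sign (even2_signZ (ha2 z) (ht i) (ht j)).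
under eq_bigr => k _ do rewrite Wh_sign (even2_signZ (ha2 z) (ht i) (ht k)).
by rewrite !mulrA.
Qed.

Lemma msg_up_sign z i :
  msg_up (T *m Bu) (T *m H) W1 a1 z i = t 0 i *: msg_up Bu H W1 a1 z i.
Proof.
rewrite /msg_up; under eq_bigr => j _ do rewrite alpha_up_sign Wh_sign.
exact: sum_signed_weights.
Qed.

Lemma msg_down_sign z i :
  msg_down (Bd *m T) (T *m H) W2 a2 z i = t 0 i *: msg_down Bd H W2 a2 z i.
Proof.
rewrite /msg_down; under eq_bigr => j _ do rewrite alpha_down_sign Wh_sign.
exact: sum_signed_weights.
Qed.

Lemma sat_layer_sign :
  sat_layer (Bd *m T) (T *m Bu) (T *m H) W1 W2 a1 a2 phi
  = T *m sat_layer Bd Bu H W1 W2 a1 a2 phi.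
Proof.
apply/row_matrixP => i; rewrite row_mul row_diag_mx -scalemxAl -rowE !rowK.
rewrite -[RHS]linearZ /=; congr mxvec; apply/matrixP => z l.
by rewrite !mxE msg_up_sign msg_down_sign (odd2_signZ (hphi z) (ht i)) !mxE.
Qed.

End SignEquivariance.

Theorem proposition1 (R : realType) (N : nat) (K : {set {set 'I_N}})
  (hK : simplicial_complex K) (s : {set 'I_N} -> bool) (d : nat)
  (F F' G Z : nat) (hF : (0 < F)%N) (hF' : (0 < F')%N) (hZ : (0 < Z)%N)
  (W1 W2 : 'I_Z -> 'M[R]_(F', F))
  (a1 a2 : 'I_Z -> 'cV[R]_F' -> 'cV[R]_F' -> R)
  (phi : 'I_Z -> 'cV[R]_F' -> 'cV[R]_F' -> 'cV[R]_G)
  (ha1 : forall z (u v : 'cV[R]_F'), a1 z (- u) v = a1 z u v /\ a1 z u (- v) = a1 z u v)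
  (ha2 : forall z (u v : 'cV[R]_F'), a2 z (- u) v = a2 z u v /\ a2 z u (- v) = a2 z u v)
  (hphi : forall z (x y : 'cV[R]_F'), phi z (- x) (- y) = - phi z x y)
  (H : 'M[R]_(#|cells K d.+1|, F))
  (T : 'M[R]_#|cells K d.+1|)
  (hTdiag : is_diag_mx T) (hTpm : forall i, T i i = 1 \/ T i i = -1) :
  let Bd := boundary R K s d in
  let Bu := boundary R K s d.+1 in
  sat_layer (Bd *m T) (T *m Bu) (T *m H) W1 W2 a1 a2 phi
  = T *m sat_layer Bd Bu H W1 W2 a1 a2 phi.
Proof.
move=> Bd Bu; case/diag_mxP: hTdiag hTpm => t -> htpm.
apply: sat_layer_sign => // i.
by have := htpm i; rewrite mxE eqxx mulr1n.
Qed.
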